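(* Assume Conditions 1–3 of the context hold and run the projected delayed-gradient method of the context with step sizes $\eta_t=\frac{3}{\alpha t}$ for $t\in\{\tau,\dots,T-1+\tau\}$. Then for every $x_\star\in\mathcal{W}$, $$\sum_{t=k}^{T-1}\big(f_{t;k}(x_t)-f_{t;k}(x_\star)\big)\le-\frac{\alpha}{6}\sum_{t=0}^{T-1}\|x_t-x_\star\|^2+\frac{\alpha G^2(3k+5\tau+3)}{6}+\frac{3L_g^2(1+\tau)}{\alpha}\log T+\sum_{t=k}^{T-1}\Big(\frac{3}{2\alpha}\|\varepsilon_t\|^2-\varepsilon_t^{s\top}(x_t-x_\star)\Big),$$ where $\varepsilon_t^s=\nabla f_t(x_t)-\nabla f_{t;k}(x_t)$.
   Context: Let $\mathcal{W}\subseteq\mathbb{R}^d$ be convex and let $T,\tau,k,h$ be integers with $\tau\ge1$, $h\ge1$, $\tau<k<T$. On a probability space with filtration $\{\mathcal{F}_t\}_{t\ge0}$, let $F_t:\mathcal{W}^{h+1}\to\mathbb{R}$, $t\in\{0,\dots,T-1\}$, be (random) functions and $f_t(x)=F_t(x,\dots,x)$; let $f_{t;k}(x)=\mathbb{E}[f_t(x)\mid\mathcal{F}_{t-k}]$. Condition 1: each $f_t$ is $L_f$-Lipschitz on $\mathcal{W}$ with $\max_{x\in\mathcal{W}}\|\nabla^2f_t(x)\|\le\beta$, and $f_{t;k}$ is $\alpha$-strongly convex ($\nabla^2f_{t;k}(x)\succeq\alpha I_d$ on $\mathcal{W}$) for all $t\in\{k,\dots,T-1\}$. Condition 2: each $F_t$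 is $L_c$-coordinatewise-Lipschitz, i.e. changing the $j$-th argument from $x_j$ to $\tilde x_j$ changes $F_t$ by at most $L_c\|x_j-\tilde x_j\|$, for every $j\in\{0,\dots,h\}$. Condition 3: $\sup_{x,y\in\mathcal{W}}\|x-y\|\le G$, and $\|g_t\|\le L_g$ for all $t\in\{0,\dots,T-1\}$. Method (OCO with memory and delayed feedback): initialize $x_0=\cdots=x_\tau\in\mathcal{W}$; for $t=\tau,\dots,T-1+\tau$, obtain $g_{t-\tau}=\nabla f_{t-\tau}(x_{t-\tau})+\varepsilon_{t-\tau}$ where $\varepsilon_{t-\tau}\in\mathbb{R}^d$ is an (arbitrary) gradient error, and set $x_{t+1}=\Pi_{\mathcal{W}}(x_t-\eta_tg_{t-\tau})$, with $\Pi_{\mathcal{W}}$ the Euclidean projection onto $\mathcal{W}$. *)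

From HB Require Import structures.
From mathcomp Require Import all_boot all_order all_algebra.
From mathcomp Require Import all_classical all_reals all_analysis.
Set Implicit Arguments. Unset Strict Implicit. Unset Printing Implicit Defensive.
Import Order.TTheory GRing.Theory Num.Theory.
Import numFieldNormedType.Exports.
Local Open Scope classical_set_scope.
Local Open Scope ring_scope.

Definition dotv {R : realType} {d : nat} (u v : 'rV[R]_d) : R :=
  \sum_(i < d) u ord0 i * v ord0 i.
Definition enorm {R : realType} {d : nat} (v : 'rV[R]_d) : R :=
  Num.sqrt (dotv v v).

Definition basisv {R : realType} {d : nat} (i : 'I_d) : 'rV[R]_d :=
  \row_(j < d) (if j == i then 1 else 0).

Definition grad {R : realType} {d : nat} (f : 'rV[R]_d -> R) (x : 'rV[R]_d)
  : 'rV[R]_d := \row_(i < d) ('d f x (basisv i)).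

Definition hess {R : realType} {d : nat} (f : 'rV[R]_d -> R) (x : 'rV[R]_d)
  : 'rV[R]_d -> 'rV[R]_d := 'd (grad f) x.

Definition twice_diff {R : realType} {d : nat} (f : 'rV[R]_d -> R) (x : 'rV[R]_d)
  : Prop := differentiable f x /\ differentiable (grad f) x.

Definition is_proj {R : realType} {d : nat} (W : set 'rV[R]_d) (y p : 'rV[R]_d)
  : Prop := W p /\ forall z, W z -> enorm (y - p) <= enorm (y - z).

Definition sub_sigma {dT : measure_display} {T : measurableType dT}
  (G : set (set T)) : Prop :=
  sigma_algebra setT G /\ (forall A, G A -> measurable A).

Definition filtration {dT : measure_display} {T : measurableType dT}
  (Fil : nat -> set (set T)) : Prop :=
  (forall n, sub_sigma (Fil n)) /\ (forall n m, (n <= m)%N -> Fil n `<=` Fil m).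

Definition is_cond_exp {dT : measure_display} {T : measurableType dT}
  {R : realType} (P : probability T R) (G : set (set T)) (X Y : T -> R) : Prop :=
  [/\ measurable_fun setT X,
      P.-integrable setT (EFin \o X),
      (forall B : set R, measurable B -> G (Y @^-1` B)),
      P.-integrable setT (EFin \o Y) &
      (forall A, G A -> (\int[P]_(w in A) (Y w)%:E = \int[P]_(w in A) (X w)%:E)%E)].

From HB Require Import structures.
From mathcomp Require Import all_boot all_order all_algebra.
From mathcomp Require Import all_classical all_reals all_analysis.
From mathcomp Require Import ring lra zify.
Set Implicit Arguments. Unset Strict Implicit. Unset Printing Implicit Defensive.
Import Order.TTheory GRing.Theory Num.Theory.
Import numFieldNormedType.Exports.
Local Open Scope classical_set_scope.
Local Open Scope ring_scope.

(* Fix a sample path and write D_s = |x_s - x⋆|^2.  Strong convexity of f_{t;k} bounds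
   f_{t;k}(x_t) - f_{t;k}(x⋆) by <g_t - eps_t - eps^s_t, x_t - x⋆> - (alpha/2) D_t.  The
   gradient g_t is applied at step t + tau, so nonexpansiveness of the projection gives
   <g_t, x_{t+tau} - x⋆> <= (alpha (t+tau)/6) (D_{t+tau} - D_{t+tau+1}) + 3 Lg^2/(2 alpha t),
   while the staleness <g_t, x_t - x_{t+tau}> is at most Lg times tau steps of length
   3 Lg/(alpha t), and Young's inequality absorbs -<eps_t, x_t - x⋆> into (alpha/6) D_t.
   Summing by parts, the weighted differences of D telescope to O(G^2 (k + tau)) plus
   sum_t D_t, and sum_{t >= k} 1/t <= log T. *)

Section Euclidean.
Context {R : realType} {d : nat}.
Implicit Types (u v w : 'rV[R]_d) (a : R).

Lemma dotvC u v : dotv u v = dotv v u.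
Proof. by apply: eq_bigr => i _; rewrite mulrC. Qed.

Lemma dotvDl u v w : dotv (u + v) w = dotv u w + dotv v w.
Proof. by rewrite /dotv -big_split; apply: eq_bigr => i _; rewrite !mxE mulrDl. Qed.

Lemma dotvZl a u w : dotv (a *: u) w = a * dotv u w.
Proof. by rewrite /dotv mulr_sumr; apply: eq_bigr => i _; rewrite !mxE mulrA. Qed.

Lemma dotvNl u w : dotv (- u) w = - dotv u w.
Proof. by rewrite -scaleN1r dotvZl mulN1r. Qed.

Lemma dotvBl u v w : dotv (u - v) w = dotv u w - dotv v w.
Proof. by rewrite dotvDl dotvNl. Qed.

Lemma dotvDr u v w : dotv w (u + v) = dotv w u + dotv w v.
Proof. by rewrite dotvC dotvDl !(dotvC w). Qed.

Lemma dotvZr a u w : dotv w (a *: u) = a * dotv w u.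
Proof. by rewrite dotvC dotvZl dotvC. Qed.

Lemma dotvBr u v w : dotv w (u - v) = dotv w u - dotv w v.
Proof. by rewrite dotvC dotvBl !(dotvC w). Qed.

Lemma dotvv_ge0 u : 0 <= dotv u u.
Proof. by apply: sumr_ge0 => i _; rewrite -expr2 sqr_ge0. Qed.

Lemma dotvv u : dotv u u = enorm u ^+ 2.
Proof. by rewrite sqr_sqrtr // dotvv_ge0. Qed.

Lemma enorm_ge0 u : 0 <= enorm u.
Proof. exact: sqrtr_ge0. Qed.

Lemma enorm0 : enorm (0 : 'rV[R]_d) = 0.
Proof. by rewrite /enorm /dotv big1 ?sqrtr0 // => i _; rewrite mxE mul0r. Qed.

Lemma enormN u : enorm (- u) = enorm u.
Proof. by rewrite /enorm dotvNl dotvC dotvNl opprK. Qed.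

Lemma enormZ a u : enorm (a *: u) = `|a| * enorm u.
Proof. by rewrite /enorm dotvZl dotvZr mulrA -expr2 sqrtrM ?sqr_ge0 // sqrtr_sqr. Qed.

Lemma dotv0l_eq0 u v : enorm u = 0 -> dotv u v = 0.
Proof.
move=> /eqP; rewrite sqrtr_eq0 le_eqVlt ltNge dotvv_ge0 orbF.
move=> /eqP/psumr_eq0P u0; apply: big1 => i _.
have /eqP := u0 (fun j _ => sqr_ge0 (u ord0 j)) i isT.
by rewrite mulf_eq0 orbb => /eqP ->; rewrite mul0r.
Qed.

Lemma dotv_le u v : dotv u v <= enorm u * enorm v.
Proof.
have [u0|u0] := eqVneq (enorm u) 0; first by rewrite dotv0l_eq0 // u0 mul0r.
have [v0|v0] := eqVneq (enorm v) 0; first by rewrite dotvC dotv0l_eq0 // v0 mulr0.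
have uv_gt0 : 0 < enorm u * enorm v by rewrite mulr_gt0 // lt0r ?u0 ?v0 enorm_ge0.
(* [0 <= |(|v| u - |u| v)|^2 = 2 |u| |v| (|u| |v| - <u, v>)] *)
have := dotvv_ge0 (enorm v *: u - enorm u *: v).
rewrite !(dotvBl, dotvBr, dotvZl, dotvZr) (dotvC v u) !dotvv => sq_ge0.
rewrite -subr_ge0 -(pmulr_rge0 _ uv_gt0); nra.
Qed.

Lemma enormD_le u v : enorm (u + v) <= enorm u + enorm v.
Proof.
rewrite -(@ler_pXn2r _ 2) ?nnegrE ?addr_ge0 ?enorm_ge0 //.
rewrite -dotvv dotvDl !dotvDr (dotvC v u) !dotvv sqrrD.
have := dotv_le u v; lra.
Qed.

Lemma dotv_young l u v : 0 < l ->
  dotv u v <= l / 2 * enorm u ^+ 2 + (2 * l)^-1 * enorm v ^+ 2.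
Proof.
move=> l_gt0; have := dotvv_ge0 (l *: u - v).
rewrite !(dotvBl, dotvBr, dotvZl, dotvZr) (dotvC v u) !dotvv => sq_ge0.
rewrite -(ler_pM2l (_ : 0 < 2 * l)) ?mulr_gt0 //.
have -> : 2 * l * (l / 2 * enorm u ^+ 2 + (2 * l)^-1 * enorm v ^+ 2)
  = l * (l * enorm u ^+ 2) + enorm v ^+ 2 by field; rewrite gt_eqF.
lra.
Qed.

End Euclidean.

Lemma convex_segment (R : realType) d (W : set 'rV[R]_d) y z t :
  convex_set W -> W y -> W z -> 0 <= t <= 1 -> W (z + t *: (y - z)).
Proof.
move=> cW Wy Wz /andP[t0 t1]; have := cW y z (Itv01 t0 t1); rewrite !inE => /(_ Wy Wz).
congr W; change (t *: y + (1 - t) *: z = z + t *: (y - z)).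
by apply/rowP => j; rewrite !mxE; ring.
Qed.

Lemma le0_of_le_small_mul (R : realFieldType) (a b : R) :
  (forall s, 0 < s <= 1 -> a <= s * b) -> a <= 0.
Proof.
move=> small; rewrite leNgt; apply/negP => a_gt0.
have b_gt0 : 0 < b by rewrite -[b]mul1r (lt_le_trans a_gt0) // small // ltr01 lexx.
have ab_gt0 : 0 < a + b by rewrite addr_gt0.
(* [s := a / (a + b)] would give [a (a + b) <= a b], i.e. [a^2 <= 0] *)
have := small (a / (a + b)); rewrite divr_gt0 // ler_pdivrMr // mul1r lerDl ltW //.
rewrite mulrAC ler_pdivlMr // => /(_ isT); nra.
Qed.

Section Projection.
Context {R : realType} {d : nat} (W : set 'rV[R]_d).
Hypothesis convW : convex_set W.
Implicit Types (y p z u : 'rV[R]_d).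

Lemma is_proj_obtuse y p z : is_proj W y p -> W z -> dotv (y - p) (z - p) <= 0.
Proof.
move=> [Wp p_min] Wz; apply: (@le0_of_le_small_mul _ _ (enorm (z - p) ^+ 2 / 2)).
move=> s /andP[s_gt0 s_le1].
have s01 : 0 <= s <= 1 by rewrite ltW.
have := p_min _ (convex_segment convW Wz Wp s01).
rewrite -(@ler_pXn2r _ 2) ?nnegrE ?enorm_ge0 // -!dotvv.
have -> : y - (p + s *: (z - p)) = (y - p) - s *: (z - p) by rewrite opprD addrA.
move: (y - p) (z - p) => a b.
rewrite !(dotvBl, dotvBr, dotvZl, dotvZr) (dotvC b a); nra.
Qed.

Lemma is_proj_dist_le y p z : is_proj W y p -> W z -> enorm (p - z) <= enorm (y - z).
Proof.
move=> yp Wz; have := is_proj_obtuse yp Wz.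
rewrite -[_ <= enorm _](@ler_pXn2r _ 2) ?nnegrE ?enorm_ge0 // -!dotvv.
have -> : y - z = (y - p) - (z - p) by rewrite opprB addrA subrK.
have -> : p - z = - (z - p) by rewrite opprB.
move: (y - p) (z - p) => a b.
rewrite -scaleN1r !(dotvDl, dotvDr, dotvZl, dotvZr) (dotvC b a).
have := dotvv_ge0 a; lra.
Qed.

Lemma is_proj_step_le e u y p z : 0 < e -> is_proj W (y - e *: u) p -> W z ->
  dotv u (y - z) <= (enorm (y - z) ^+ 2 - enorm (p - z) ^+ 2) / (2 * e) + e / 2 * enorm u ^+ 2.
Proof.
move=> e_gt0 yp Wz; rewrite -(ler_pM2l (_ : 0 < 2 * e)) ?mulr_gt0 //.
have -> : 2 * e * ((enorm (y - z) ^+ 2 - enorm (p - z) ^+ 2) / (2 * e) + e / 2 * enorm u ^+ 2)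
  = enorm (y - z) ^+ 2 - enorm (p - z) ^+ 2 + e * (e * enorm u ^+ 2) by field; rewrite gt_eqF.
have := is_proj_dist_le yp Wz.
rewrite -[enorm (p - z) <= _](@ler_pXn2r _ 2) ?nnegrE ?enorm_ge0 // -!dotvv.
have -> : y - e *: u - z = (y - z) - e *: u by rewrite addrAC.
move: (y - z) => a.
rewrite !(dotvBl, dotvBr, dotvZl, dotvZr) (dotvC u); lra.
Qed.

End Projection.

Lemma is_derive_sqr (R : realType) (t : R) : is_derive t 1 (fun s : R => s ^+ 2) (2 * t).
Proof.
by have := is_deriveX 2 (@is_derive_id _ _ t 1); rewrite scaler1 expr1.
Qed.

Lemma secant_le_deriv (R : realType) (q dq d2q : R -> R) (c : R) :
  (forall t : R, 0 <= t <= 1 -> is_derive t 1 q (dq t)) ->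
  (forall t : R, 0 <= t <= 1 -> is_derive t 1 dq (d2q t)) ->
  (forall t : R, 0 <= t <= 1 -> c <= d2q t) ->
  q 1 - q 0 <= dq 1 - c / 2.
Proof.
move=> q' dq' d2q_ge.
have mvt (f df : R -> R) (a b : R) : 0 <= a <= b -> b <= 1 ->
    (forall t : R, 0 <= t <= 1 -> is_derive t 1 f (df t)) ->
    exists2 m, 0 <= m <= 1 & f b - f a = df m * (b - a).
  move=> /andP[a_ge0 ab] b_le1 f'.
  have in01 t : t \in `[a, b] -> 0 <= t <= 1.
    by rewrite in_itv => /andP[a_t t_b]; rewrite (le_trans a_ge0) ?(le_trans t_b).
  have f_cont : {within `[a, b], continuous f}.
    by apply: derivable_within_continuous => t /in01 /f' [].
  have f'_ab t : t \in `]a, b[ -> is_derive t 1 f (df t).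
    by move/subset_itv_oo_cc/in01; exact: f'.
  by have [m /in01] := MVT_segment ab f'_ab f_cont; exists m.
(* [chi] has a nondecreasing derivative, so its secant slope over [0, 1] is at most [dchi 1]. *)
pose chi t := q t - c / 2 * t ^+ 2.
pose dchi t := dq t - c * t.
have chi' (t : R) : 0 <= t <= 1 -> is_derive t 1 chi (dchi t).
  move=> t01; have := is_deriveB (q' t t01) (is_deriveZ (c / 2) (is_derive_sqr t)).
  by rewrite /dchi [_ *: _]mulrA divfK ?pnatr_eq0.
have dchi' (t : R) : 0 <= t <= 1 -> is_derive t 1 dchi (d2q t - c).
  move=> t01; have := is_deriveB (dq' t t01) (is_deriveZ c (@is_derive_id _ _ t 1)).
  by rewrite scaler1.
have unit01 : 0 <= (0 : R) <= 1 by rewrite lexx ler01.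
have [m m01 chi_secant] := mvt _ _ 0 1 unit01 (lexx _) chi'.
have [m' m'01 dchi_incr] := mvt _ _ m 1 m01 (lexx _) dchi'.
have := d2q_ge m' m'01; move: m01 chi_secant dchi_incr; rewrite /chi /dchi.
move=> /andP[_ m_le1]; rewrite !expr0n expr1n /=; nra.
Qed.

Section Directional.
Context {R : realType} {d : nat}.
Implicit Types (y z v w : 'rV[R]_d) (s : R).

Lemma dotv_grad (phi : 'rV[R]_d -> R) y v : dotv (grad phi y) v = 'd phi y v.
Proof.
have {2}-> : v = \sum_(i < d) v ord0 i *: basisv i.
  apply/rowP => j; rewrite summxE (bigD1 j) //= big1 ?addr0 => [|i /negbTE ij].
    by rewrite !mxE eqxx mulr1.
  by rewrite !mxE eq_sym ij mulr0.
rewrite linear_sum; apply: eq_bigr => i _.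
by rewrite linearZ !mxE mulrC.
Qed.

Lemma is_derive_line (V : normedModType R) (F : 'rV[R]_d -> V) z v s :
  differentiable F (z + s *: v) ->
  is_derive s 1 (fun t => F (z + t *: v)) ('d F (z + s *: v) v).
Proof.
move=> dF.
have quot : (fun h : R => h^-1 *: (((fun t => F (z + t *: v)) \o shift s) (h *: 1)
                                    - F (z + s *: v)))
          = (fun h => h^-1 *: ((F \o shift (z + s *: v)) (h *: v) - F (z + s *: v))).
  apply/funext => h /=; congr (_ *: (F _ - _)).
  by apply/rowP => j; rewrite !mxE /GRing.scale /=; ring.
apply: DeriveDef; first by rewrite /derivable quot; exact: diff_derivable.
by rewrite -deriveE // /derive quot.
Qed.

Lemma continuous_dotvl w : continuous (fun u : 'rV[R]_d => dotv u w).
Proof.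
apply: continuous_big => [|i _ u]; first exact: add_continuous.
exact: (@continuous_comp _ _ _ (fun M : 'rV[R]_d => M ord0 i) ( *%R^~ (w ord0 i)) u
  (@coord_continuous R 1 d ord0 i u) (@mulrr_continuous R (w ord0 i) _)).
Qed.

Lemma is_derive_dotvl (f : R -> 'rV[R]_d) s df w :
  is_derive s 1 f df -> is_derive s 1 (fun t => dotv (f t) w) (dotv df w).
Proof.
move=> [f_der <-].
have quot : (fun h : R => h^-1 *: (((fun t => dotv (f t) w) \o shift s) (h *: 1) - dotv (f s) w))
          = (fun u => dotv u w) \o (fun h : R => h^-1 *: ((f \o shift s) (h *: 1) - f s)).
  by apply/funext => h /=; rewrite dotvZl dotvBl.
have quot_cvg : (fun u => dotv u w) \o (fun h : R => h^-1 *: ((f \o shift s) (h *: 1) - f s))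
                @ 0^' --> dotv ('D_1 f s) w.
  by apply: continuous_cvg; [exact: continuous_dotvl | exact: f_der].
apply: DeriveDef; first by rewrite /derivable quot; apply/cvg_ex; exists (dotv ('D_1 f s) w).
by rewrite /derive quot; exact: cvg_lim.
Qed.

End Directional.

Lemma strongly_convex_le (R : realType) d (W : set 'rV[R]_d) (phi : 'rV[R]_d -> R) alpha :
  convex_set W ->
  (forall y, W y -> twice_diff phi y /\
     forall v, alpha * enorm v ^+ 2 <= dotv v (hess phi y v)) ->
  forall y z, W y -> W z ->
  phi y - phi z <= dotv (grad phi y) (y - z) - alpha / 2 * enorm (y - z) ^+ 2.
Proof.
move=> convW phi'' y z Wy Wz; set v := y - z.
have W_line t : 0 <= t <= 1 -> W (z + t *: v) by exact: convex_segment.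
have zv : z + 1 *: v = y by rewrite scale1r addrC subrK.
suff : phi (z + 1 *: v) - phi (z + 0 *: v)
       <= dotv (grad phi (z + 1 *: v)) v - alpha * enorm v ^+ 2 / 2.
  by rewrite zv scale0r addr0 mulrAC.
apply: (secant_le_deriv (q := fun t => phi (z + t *: v))
  (dq := fun t => dotv (grad phi (z + t *: v)) v)
  (d2q := fun t => dotv (hess phi (z + t *: v) v) v)) => t /W_line /phi''[[dphi dgrad] hess_ge].
- by rewrite dotv_grad; exact: is_derive_line.
- exact/is_derive_dotvl/is_derive_line.
- by rewrite dotvC; exact: hess_ge.
Qed.

Lemma sum_by_parts_nat (R : comPzRingType) (D : nat -> R) m n : (m <= n)%N ->
  \sum_(m <= s < n) s%:R * (D s - D s.+1) + n%:R * D n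
  = m%:R * D m + \sum_(m <= s < n) D s.+1.
Proof.
elim: n => [|n IH]; first by rewrite leqn0 => /eqP->; rewrite !big_geq // add0r addr0.
rewrite leq_eqVlt => /predU1P[->|le_mn]; first by rewrite !big_geq // add0r addr0.
rewrite !big_nat_recr //= addrA -(IH le_mn) -natr1; ring.
Qed.

Lemma invS_le_ln_diff (R : realType) n : (0 < n)%N ->
  (n.+1%:R : R)^-1 <= ln n.+1%:R - ln n%:R.
Proof.
move=> n_gt0; have n_pos : (0 : R) < n%:R by rewrite ltr0n.
have -> : ln n.+1%:R - ln n%:R = - ln (1 - (n.+1%:R)^-1) :> R.
  have -> : 1 - (n.+1%:R)^-1 = n%:R / n.+1%:R :> R.
    by rewrite -natr1; field; rewrite gt_eqF // ltr_pwDl.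
  by rewrite ln_div ?posrE ?ltr0n // opprB.
by rewrite lerNr; apply: le_ln1Dx; rewrite ltrN2 invf_lt1 ?ltr1n.
Qed.

Lemma harmonic_le_ln (R : realType) k n : (1 < k)%N ->
  \sum_(k <= t < n.+1) (t%:R : R)^-1 <= ln n%:R.
Proof.
move=> k_gt1; elim: n => [|n IH]; first by rewrite big_geq ?(ltnW k_gt1) // (@ln0 R 0).
have [kn|nk] := leqP k n.+1; last by rewrite big_geq ?ln_ge0 ?ler1n.
rewrite big_nat_recr //= (le_trans (lerD IH (invS_le_ln_diff _ (leq_trans k_gt1 kn)))) //.
by rewrite addrC subrK.
Qed.

Section DelayedProjectedGradient.
Variables (R : realType) (d : nat) (W : set 'rV[R]_d) (T tau k : nat) (alpha G Lg : R).
Variables (x g : nat -> 'rV[R]_d) (xs : 'rV[R]_d).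
Hypotheses (convW : convex_set W) (alpha_gt0 : 0 < alpha).
Hypotheses (tau_gt0 : (0 < tau)%N) (tau_lt_k : (tau < k)%N) (k_lt_T : (k < T)%N).
Hypothesis diamW : forall y z, W y -> W z -> enorm (y - z) <= G.
Hypothesis g_le : forall t, (t < T)%N -> enorm (g t) <= Lg.
Hypothesis x_init : forall t, (t <= tau)%N -> x t = x 0.
Hypothesis W_x0 : W (x 0).
Hypothesis x_step : forall t, (tau <= t <= T - 1 + tau)%N ->
  is_proj W (x t - 3 / (alpha * t%:R) *: g (t - tau)%N) (x t.+1).
Hypothesis W_xs : W xs.

Let D s := enorm (x s - xs) ^+ 2.
Let C := 3 * Lg ^+ 2 * (1 + tau%:R) / alpha.

Lemma W_iterate s : (s <= T + tau)%N -> W (x s).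
Proof.
move=> s_le; have [s_le_tau|] := leqP s tau; first by rewrite x_init.
case: s s_le => // s s_le tau_le_s.
by case: (x_step (t := s) _) => //; apply/andP; split; lia.
Qed.

Lemma Lg_ge0 : 0 <= Lg.
Proof. by apply: le_trans (enorm_ge0 (g 0)) (g_le _); lia. Qed.

Lemma D_le s : (s <= T + tau)%N -> D s <= G ^+ 2.
Proof.
move=> s_le; rewrite /D lerXn2r ?nnegrE ?enorm_ge0 ?(diamW (W_iterate s_le) W_xs) //.
exact: le_trans (enorm_ge0 _) (diamW W_xs W_xs).
Qed.

Lemma iterate_step_le s : (tau <= s <= T - 1 + tau)%N ->
  enorm (x s.+1 - x s) <= 3 / (alpha * s%:R) * Lg.
Proof.
move=> s_range; have W_s : W (x s) by apply: W_iterate; lia.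
have eta_ge0 : 0 <= 3 / (alpha * s%:R) by rewrite divr_ge0 ?mulr_ge0 ?(ltW alpha_gt0).
have := is_proj_dist_le convW (x_step s_range) W_s.
rewrite addrAC subrr add0r enormN enormZ ger0_norm // => /le_trans; apply.
by rewrite ler_wpM2l // g_le //; lia.
Qed.

Lemma iterate_drift_le t j : (k <= t < T)%N -> (j <= tau)%N ->
  enorm (x t - x (t + j)) <= j%:R * (3 / (alpha * t%:R) * Lg).
Proof.
move=> /andP[kt tT]; elim: j => [|j IH] j_le; first by rewrite addn0 subrr enorm0 mul0r.
have -> : x t - x (t + j.+1) = (x t - x (t + j)) - (x (t + j).+1 - x (t + j)).
  by rewrite addnS opprB addrA subrK.
rewrite (le_trans (enormD_le _ _)) // enormN -natr1 mulrDl mul1r lerD ?IH 1?ltnW //.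
apply: le_trans (iterate_step_le _) _; first by apply/andP; split; lia.
have t_gt0 : (0 < t)%N by lia.
rewrite ler_wpM2r ?Lg_ge0 // ler_pM2l // lef_pV2 ?posrE ?mulr_gt0 ?ltr0n ?addn_gt0 ?t_gt0 //.
by rewrite ler_pM2l // ler_nat leq_addr.
Qed.

Lemma applied_gradient_le t : (k <= t < T)%N ->
  dotv (g t) (x (t + tau) - xs)
  <= alpha / 6 * ((t + tau)%:R * (D (t + tau) - D (t + tau).+1))
     + 3 * Lg ^+ 2 / (2 * alpha) / t%:R.
Proof.
move=> /andP[kt tT]; set u := (t + tau)%N.
have t_gt0 : (0 : R) < t%:R by rewrite ltr0n; lia.
have u_gt0 : (0 : R) < u%:R by rewrite ltr0n; lia.
have eta_gt0 : 0 < 3 / (alpha * u%:R) by rewrite divr_gt0 ?mulr_gt0.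
have u_range : (tau <= u <= T - 1 + tau)%N by apply/andP; split; lia.
have := is_proj_step_le convW eta_gt0 (x_step u_range) W_xs; rewrite addnK.
move=> /le_trans; apply; rewrite -/(D u) -/(D u.+1); apply: lerD.
  by rewrite le_eqVlt; apply/orP; left; apply/eqP; field; rewrite !gt_eqF.
have -> : 3 * Lg ^+ 2 / (2 * alpha) / t%:R = 3 / (alpha * t%:R) / 2 * Lg ^+ 2.
  by field; rewrite !gt_eqF.
rewrite ler_pM ?divr_ge0 ?mulr_ge0 ?sqr_ge0 ?enorm_ge0 ?(ltW alpha_gt0) //.
  by rewrite ler_pM2r // ler_pM2l // lef_pV2 ?posrE ?mulr_gt0 // ler_pM2l // ler_nat leq_addr.
by rewrite lerXn2r ?nnegrE ?enorm_ge0 ?Lg_ge0 ?g_le.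
Qed.

Lemma gradient_delay_le t : (k <= t < T)%N ->
  dotv (g t) (x t - x (t + tau)) <= 3 * Lg ^+ 2 * tau%:R / alpha / t%:R.
Proof.
move=> t_range; have /andP[_ tT] := t_range.
apply: le_trans (dotv_le _ _) _.
have drift := iterate_drift_le t_range (leqnn tau).
apply: le_trans (ler_pM (enorm_ge0 _) (enorm_ge0 _) (g_le tT) drift) _.
by rewrite le_eqVlt; apply/orP; left; apply/eqP; field; rewrite !gt_eqF // ltr0n; lia.
Qed.

Lemma one_step_regret_le (e es : nat -> 'rV[R]_d) t : (k <= t < T)%N ->
  dotv (g t - e t - es t) (x t - xs) - alpha / 2 * D t
  <= alpha / 6 * ((t + tau)%:R * (D (t + tau) - D (t + tau).+1)) + C / t%:R
     + (3 / (2 * alpha) * enorm (e t) ^+ 2 - dotv (es t) (x t - xs)) - alpha / 3 * D t.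
Proof.
move=> t_range; have t_gt0 : (0 : R) < t%:R by case/andP: t_range => kt _; rewrite ltr0n; lia.
have young := dotv_young (- e t) (x t - xs) (divr_gt0 (ltr0Sn _ 2) alpha_gt0).
rewrite dotvNl enormN in young; move: young.
(* [g t] is only used at step [t + tau]: split off the resulting staleness. *)
have split_g : dotv (g t - e t - es t) (x t - xs) = dotv (g t) (x (t + tau) - xs)
    + dotv (g t) (x t - x (t + tau)) - dotv (e t) (x t - xs) - dotv (es t) (x t - xs).
  by rewrite !dotvBl -dotvDr [_ + (x t - _)]addrC subrKA.
have const : 3 * Lg ^+ 2 / (2 * alpha) / t%:R + 3 * Lg ^+ 2 * tau%:R / alpha / t%:R <= C / t%:R.
  rewrite -mulrDl ler_wpM2r ?invr_ge0 ?(ltW t_gt0) // /C -subr_ge0.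
  have -> : 3 * Lg ^+ 2 * (1 + tau%:R) / alpha
            - (3 * Lg ^+ 2 / (2 * alpha) + 3 * Lg ^+ 2 * tau%:R / alpha)
          = 3 * Lg ^+ 2 / (2 * alpha) by field; rewrite gt_eqF.
  by rewrite divr_ge0 ?mulr_ge0 ?(ltW alpha_gt0) ?Lg_ge0.
have -> : 3 / alpha / 2 = 3 / (2 * alpha) by field; rewrite gt_eqF.
have -> : (2 * (3 / alpha))^-1 = alpha / 6 by field; rewrite gt_eqF.
move=> young; have := applied_gradient_le t_range; have := gradient_delay_le t_range.
rewrite split_g /D; lra.
Qed.

Lemma weighted_telescope_le :
  \sum_(k <= t < T) (t + tau)%:R * (D (t + tau) - D (t + tau).+1)
  <= (k + tau)%:R * G ^+ 2 + tau.+1%:R * G ^+ 2 + \sum_(k <= t < T) D t.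
Proof.
have D_ge0 s : 0 <= D s by rewrite sqr_ge0.
have -> : \sum_(k <= t < T) (t + tau)%:R * (D (t + tau) - D (t + tau).+1)
        = \sum_(k + tau <= s < T + tau) s%:R * (D s - D s.+1).
  by rewrite big_addn addnK.
have := sum_by_parts_nat D (_ : k + tau <= T + tau)%N; rewrite leq_add2r ltnW // => /(_ isT).
move/(canRL (addrK _)) => ->.
have head : (k + tau)%:R * D (k + tau)%N <= (k + tau)%:R * G ^+ 2.
  by rewrite ler_wpM2l ?D_le // leq_add2r ltnW.
have tail : \sum_(k + tau <= s < T + tau) D s.+1 <= tau.+1%:R * G ^+ 2 + \sum_(k <= t < T) D t.
  have -> : \sum_(k + tau <= s < T + tau) D s.+1 = \sum_((k + tau).+1 <= s < (T + tau).+1) D s.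
    by rewrite big_add1.
  apply: (@le_trans _ _ (\sum_(k <= s < (T + tau).+1) D s)).
    rewrite [leRHS](big_cat_nat (n := (k + tau).+1)) ?lerDr ?sumr_ge0 //; lia.
  rewrite [leLHS](big_cat_nat (n := T)) ?(ltnW k_lt_T) 1?leqW ?leq_addr //= addrC lerD2r.
  apply: le_trans (ler_sum_nat (G := fun=> G ^+ 2) _) _ => [s /andP[_ s_lt]|].
    by apply: D_le; lia.
  by rewrite sumr_const_nat mulr_natl -addnS addKn.
have nD_ge0 : 0 <= (T + tau)%:R * D (T + tau)%N by rewrite mulr_ge0.
lra.
Qed.

Lemma harmonic_sum_le : \sum_(k <= t < T) (t%:R : R)^-1 <= ln T%:R.
Proof.
have := @harmonic_le_ln R k T.-1 (leq_ltn_trans tau_gt0 tau_lt_k).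
rewrite prednK; last lia.
move=> /le_trans; apply; rewrite ler_ln ?posrE ?ltr0n ?ler_nat ?leq_pred //; lia.
Qed.

Lemma delayed_projected_gradient_regret (ell : nat -> 'rV[R]_d -> R) (e es : nat -> 'rV[R]_d) :
  (forall t, (k <= t < T)%N -> W (x t) ->
     ell t (x t) - ell t xs
     <= dotv (g t - e t - es t) (x t - xs) - alpha / 2 * enorm (x t - xs) ^+ 2) ->
  \sum_(k <= t < T) (ell t (x t) - ell t xs)
  <= - (alpha / 6) * \sum_(0 <= t < T) enorm (x t - xs) ^+ 2
     + alpha * G ^+ 2 * (3 * k%:R + 5 * tau%:R + 3) / 6
     + 3 * Lg ^+ 2 * (1 + tau%:R) / alpha * ln T%:R
     + \sum_(k <= t < T) (3 / (2 * alpha) * enorm (e t) ^+ 2 - dotv (es t) (x t - xs)).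
Proof.
move=> ell_descent.
have step t : (k <= t < T)%N -> ell t (x t) - ell t xs
    <= alpha / 6 * ((t + tau)%:R * (D (t + tau) - D (t + tau).+1)) + C / t%:R
       + (3 / (2 * alpha) * enorm (e t) ^+ 2 - dotv (es t) (x t - xs)) - alpha / 3 * D t.
  move=> t_range; apply: le_trans (one_step_regret_le e es t_range).
  by apply: ell_descent => //; apply: W_iterate; case/andP: t_range; lia.
apply: le_trans (ler_sum_nat step) _.
rewrite sumrB !big_split /= -!mulr_sumr.
rewrite [X in - (alpha / 6) * X](big_cat_nat (n := k)) //=; last exact: ltnW.
have head_le : \sum_(0 <= t < k) D t <= k%:R * G ^+ 2.
  apply: le_trans (ler_sum_nat (G := fun=> G ^+ 2) _) _ => [t /andP[_ t_lt]|].
    by apply: D_le; lia.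
  by rewrite sumr_const_nat mulr_natl subn0.
have a6_ge0 : 0 <= alpha / 6 by rewrite divr_ge0 ?(ltW alpha_gt0).
have C_ge0 : 0 <= C by rewrite divr_ge0 ?mulr_ge0 ?addr_ge0 ?(ltW alpha_gt0) ?Lg_ge0.
have := ler_wpM2l a6_ge0 weighted_telescope_le.
have := ler_wpM2l C_ge0 harmonic_sum_le.
have := ler_wpM2l a6_ge0 head_le.
have aG_ge0 : 0 <= alpha * G ^+ 2 := mulr_ge0 (ltW alpha_gt0) (sqr_ge0 G).
have := mulr_ge0 aG_ge0 (ler0n _ k); have := mulr_ge0 aG_ge0 (ler0n _ tau).
rewrite /C /D !natrD; lra.
Qed.

End DelayedProjectedGradient.

Theorem lemma12
  (R : realType) (dT : measure_display) (Omega : measurableType dT)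
  (P : probability Omega R) (Fil : nat -> set (set Omega))
  (d T tau k h : nat) (W : set 'rV[R]_d)
  (F : nat -> Omega -> ('I_h.+1 -> 'rV[R]_d) -> R)
  (fk : nat -> Omega -> 'rV[R]_d -> R)
  (x : nat -> Omega -> 'rV[R]_d) (g eps : nat -> Omega -> 'rV[R]_d)
  (Lf beta alpha Lc G Lg : R) :
  let f := fun t w (y : 'rV[R]_d) => F t w (fun _ => y) in
  let eta := fun t : nat => 3 / (alpha * t%:R) in
  convex_set W -> filtration Fil ->
  (1 <= tau)%N -> (1 <= h)%N -> (tau < k)%N -> (k < T)%N ->
  0 < alpha ->
  (* f_{t;k}(y) = E[f_t(y) | F_{t-k}] *)
  (forall t y, (k <= t < T)%N -> W y ->
     is_cond_exp P (Fil (t - k)%N) (fun w => f t w y) (fun w => fk t w y)) ->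
  (* Condition 1 *)
  (forall t w, (t < T)%N -> forall y z, W y -> W z ->
     `|f t w y - f t w z| <= Lf * enorm (y - z)) ->
  (forall t w, (t < T)%N -> forall y, W y ->
     twice_diff (f t w) y /\
     forall v, enorm (hess (f t w) y v) <= beta * enorm v) ->
  (forall t w, (k <= t < T)%N -> forall y, W y ->
     twice_diff (fk t w) y /\
     forall v, alpha * enorm v ^+ 2 <= dotv v (hess (fk t w) y v)) ->
  (* Condition 2 *)
  (forall t w, (t < T)%N -> forall (ys : 'I_h.+1 -> 'rV[R]_d) (j : 'I_h.+1) z,
     (forall i, W (ys i)) -> W z ->
     `|F t w ys - F t w (fun i => if i == j then z else ys i)|
       <= Lc * enorm (ys j - z)) ->
  (* Condition 3 *)
  (forall y z, W y -> W z -> enorm (y - z) <= G) ->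
  (forall t w, (t < T)%N -> enorm (g t w) <= Lg) ->
  (* the method *)
  (forall w t, (t <= tau)%N -> x t w = x 0%N w) ->
  (forall w, W (x 0%N w)) ->
  (forall w t, (tau <= t <= T - 1 + tau)%N ->
     g (t - tau)%N w = grad (f (t - tau)%N w) (x (t - tau)%N w) + eps (t - tau)%N w
     /\ is_proj W (x t w - eta t *: g (t - tau)%N w) (x t.+1 w)) ->
  forall w (xs : 'rV[R]_d), W xs ->
    let epss := fun t => grad (f t w) (x t w) - grad (fk t w) (x t w) in
    \sum_(k <= t < T) (fk t w (x t w) - fk t w xs)
    <= - (alpha / 6) * \sum_(0 <= t < T) enorm (x t w - xs) ^+ 2
       + alpha * G ^+ 2 * (3 * k%:R + 5 * tau%:R + 3) / 6
       + 3 * Lg ^+ 2 * (1 + tau%:R) / alpha * ln T%:R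
       + \sum_(k <= t < T) (3 / (2 * alpha) * enorm (eps t w) ^+ 2
                            - dotv (epss t) (x t w - xs)).
Proof.
(* The bound is pathwise: only the strong convexity of [fk] is used, not the conditional
   expectation structure nor the Lipschitz and smoothness conditions. *)
move=> f eta convW _ tau_gt0 _ tau_lt_k k_lt_T alpha_gt0 _ _ _ fk_convex _ diamW g_le
  x_init W_x0 method w xs W_xs; cbv zeta.
have x_step t : (tau <= t <= T - 1 + tau)%N ->
    is_proj W (x t w - eta t *: g (t - tau)%N w) (x t.+1 w).
  by move=> /(method w) [].
have g_grad t : (t < T)%N -> g t w = grad (f t w) (x t w) + eps t w.
  by move=> tT; have [] := method w (t + tau)%N; rewrite ?addnK //; apply/andP; split; lia.
apply: (delayed_projected_gradient_regret convW alpha_gt0 tau_gt0 tau_lt_k k_lt_T diamW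
  (g_le^~ w) (x_init w) (W_x0 w) x_step W_xs (ell := fk^~ w) (e := eps^~ w)
  (es := fun t => grad (f t w) (x t w) - grad (fk t w) (x t w))) => t t_range W_xt.
have -> : g t w - eps t w - (grad (f t w) (x t w) - grad (fk t w) (x t w)) = grad (fk t w) (x t w).
  by rewrite g_grad ?addrK ?subKr //; case/andP: t_range.
exact: strongly_convex_le convW (fk_convex t w t_range) _ _ W_xt W_xs.
Qed.
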